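(* For every flag complex $\Delta$ there exists a vertex-decomposable flag complex $\Gamma$ whose $h$-vector, with trailing zeros removed, equals the face vector of $\Delta$.
   Context: A flag complex is a simplicial complex all of whose minimal non-faces have two elements, equivalently the independence complex of a graph. Face vector: $(f_{-1},\ldots,f_{d-1})$, $f_i$ = number of faces with $i+1$ elements, for a $(d-1)$-dimensional complex; $h$-vector: $(h_0,\ldots,h_d)$ with $h_j=\sum_{i=0}^{j}(-1)^{j-i}\binom{d-i}{j-i}f_{i-1}$. A pure complex $\Delta$ is vertex-decomposable if it is a simplex or has a vertex $v$ with $\mathrm{link}_\Delta v=\{\tau\in\Delta: v\notin\tau,\ \tau\cup\{v\}\in\Delta\}$ and $\mathrm{del}_\Delta v=\{\tau\in\Delta: v\notin\tau\}$ both pure and vertex-decomposable. *)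

From HB Require Import structures.
From mathcomp Require Import all_boot all_order all_algebra.
Set Implicit Arguments. Unset Strict Implicit. Unset Printing Implicit Defensive.
Import GRing.Theory Num.Theory.

Section Complexes.
Variable T : finType.
Implicit Types (D : {set {set T}}) (A B F G : {set T}) (v : T).

Definition simplicial_complex D : Prop :=
  set0 \in D /\ forall A B, B \in D -> A \subset B -> A \in D.

(* flag: every minimal non-face has two elements, i.e. every vertex set
   all of whose (at most) 2-element subsets are faces is a face *)
Definition flag_complex D : Prop :=
  simplicial_complex D /\
  forall A, (forall x y, x \in A -> y \in A -> [set x; y] \in D) -> A \in D.

Definition facet D F : Prop := F \in D /\ forall G, G \in D -> F \subset G -> G = F.

Definition pure D : Prop :=
  forall F G, facet D F -> facet D G -> #|F| = #|G|.

Definition link D v : {set {set T}} :=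
  [set tau in D | (v \notin tau) && (v |: tau \in D)].

Definition del D v : {set {set T}} := [set tau in D | v \notin tau].

Inductive vertex_decomposable : {set {set T}} -> Prop :=
| vd_simplex S : vertex_decomposable (powerset S)
| vd_step D v : pure D -> [set v] \in D ->
    pure (link D v) -> pure (del D v) ->
    vertex_decomposable (link D v) -> vertex_decomposable (del D v) ->
    vertex_decomposable D.

(* d = maximal face cardinality, so D is (d-1)-dimensional *)
Definition cdim D : nat := \max_(F in D) #|F|.

(* number of faces with k elements, i.e. f_{k-1} *)
Definition fcount D (k : nat) : nat := #|[set F in D | #|F| == k]|.

(* face vector (f_{-1}, ..., f_{d-1}) *)
Definition fvector D : seq nat := mkseq (fcount D) (cdim D).+1.

Definition hentry D (j : nat) : int :=
  \sum_(i < j.+1) ((-1) ^+ (j - i) * ('C(cdim D - i, j - i) * fcount D i)%:Z)%R.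

Definition hvector D : seq int := mkseq (hentry D) (cdim D).+1.

End Complexes.

Definition strip_trailing_zeros (s : seq int) : seq int :=
  foldr (fun x r => if (r == [::]) && (x == 0%R) then [::] else x :: r) [::] s.

From mathcomp Require Import all_boot all_order all_algebra zify ring.
Set Implicit Arguments. Unset Strict Implicit. Unset Printing Implicit Defensive.
Import GRing.Theory Num.Theory.

(* Double the vertex set: Γ has vertices x⁺ = inl x and x⁻ = inr x for every x in
   the ground set, and its faces are the A⁺ ⊔ B⁻ with A ∈ Δ and B disjoint from A.
   Its minimal non-faces are those of Δ together with the edges {x⁺, x⁻}, so Γ is
   flag, and all its facets have one vertex over each x, so it is pure.  Shedding
   x⁺ leaves the same construction for the link and the deletion of x in Δ, which
   gives vertex decomposability by induction; when Δ has no vertices Γ is a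
   simplex.  Finally f_Γ(t) = Σ_{A ∈ Δ} t^|A| (1 + t)^(n - |A|), so the
   h-polynomial of Γ is Σ_{A ∈ Δ} t^|A|, the face polynomial of Δ. *)

Section LinkDeletion.
Variable T : finType.
Implicit Types (D : {set {set T}}) (v : T).

Lemma link_sub D v : link D v \subset D.
Proof. by apply/subsetP => A; rewrite inE => /andP[]. Qed.

Lemma del_proper D v : [set v] \in D -> del D v \proper D.
Proof.
move=> vD; apply/properP; split; first by apply/subsetP => A; rewrite inE => /andP[].
by exists [set v]; rewrite // inE set11 andbF.
Qed.

Lemma link_simplicial D v :
  simplicial_complex D -> [set v] \in D -> simplicial_complex (link D v).
Proof.
move=> [D0 Dc] vD; split; first by rewrite !inE D0 setU0 vD.
move=> A B; rewrite !inE => /and3P[BD vB vBD] AB.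
rewrite (Dc _ _ BD AB) (Dc _ _ vBD) ?setUS // andbT.
by apply: contra vB; apply: (subsetP AB).
Qed.

Lemma del_simplicial D v : simplicial_complex D -> simplicial_complex (del D v).
Proof.
move=> [D0 Dc]; split; first by rewrite !inE D0.
move=> A B; rewrite !inE => /andP[BD vB] AB.
by rewrite (Dc _ _ BD AB); apply: contra vB; apply: (subsetP AB).
Qed.

End LinkDeletion.

Section DisjointJoin.
Variable T : finType.
Implicit Types (D : {set {set T}}) (S A B : {set T}) (F : {set T + T}) (v : T).

Definition lpart F : {set T} := inl @^-1: F.
Definition rpart F : {set T} := inr @^-1: F.

Definition disjoint_join D S : {set {set T + T}} :=
  [set F | [&& lpart F \in D, [disjoint lpart F & rpart F] & rpart F \subset S]].

Lemma in_disjoint_join D S F : (F \in disjoint_join D S) =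
  [&& lpart F \in D, [disjoint lpart F & rpart F] & rpart F \subset S].
Proof. by rewrite inE. Qed.

Lemma disjoint_joinP D S F : reflect
  [/\ lpart F \in D, [disjoint lpart F & rpart F] & rpart F \subset S]
  (F \in disjoint_join D S).
Proof. by rewrite in_disjoint_join; apply: and3P. Qed.

Lemma card_lpart_rpart F : #|F| = #|lpart F| + #|rpart F|.
Proof.
rewrite -sum1_card big_sumType /= -!sum1dep_card.
by congr (_ + _); apply: eq_card => x; rewrite !inE.
Qed.

Lemma lpart_setU1l v F : lpart (inl v |: F) = v |: lpart F.
Proof. by apply/setP => x; rewrite !inE. Qed.

Lemma rpart_setU1l v F : rpart (inl v |: F) = rpart F.
Proof. by apply/setP => x; rewrite !inE. Qed.

Lemma lpart_setU1r v F : lpart (inr v |: F) = lpart F.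
Proof. by apply/setP => x; rewrite !inE. Qed.

Lemma rpart_setU1r v F : rpart (inr v |: F) = v |: rpart F.
Proof. by apply/setP => x; rewrite !inE. Qed.

Lemma disjointU1l v A B : [disjoint v |: A & B] = (v \notin B) && [disjoint A & B].
Proof. by rewrite -disjointU1; apply: eq_disjoint => y; rewrite !inE. Qed.

Lemma link_disjoint_join D S v :
  link (disjoint_join D S) (inl v) = disjoint_join (link D v) (S :\ v).
Proof.
apply/setP => F; rewrite !inE lpart_setU1l rpart_setU1l disjointU1l subsetD1.
have -> : (inl v \in F) = (v \in lpart F) by rewrite inE.
by case: (lpart F \in D); case: (v \in lpart F); case: (v |: lpart F \in D);
   case: (v \in rpart F); case: [disjoint lpart F & rpart F]; case: (rpart F \subset S).
Qed.

Lemma del_disjoint_join D S v :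
  del (disjoint_join D S) (inl v) = disjoint_join (del D v) S.
Proof.
apply/setP => F; rewrite !inE.
have -> : (inl v \in F) = (v \in lpart F) by rewrite inE.
by case: (v \in lpart F); rewrite /= ?andbF ?andbT.
Qed.

(* A facet can always be extended by [inr x] unless [x] is already used on either side. *)
Lemma card_facet_disjoint_join D S F :
  D \subset powerset S -> facet (disjoint_join D S) F -> #|F| = #|S|.
Proof.
move=> DS [FG Fmax]; move: (FG); rewrite in_disjoint_join => /and3P[LD dis RS].
have LS : lpart F \subset S by have := subsetP DS _ LD; rewrite powersetE.
suff <- : lpart F :|: rpart F = S.
  by rewrite card_lpart_rpart cardsU (disjoint_setI0 dis) cards0 subn0.
apply/eqP; rewrite eqEsubset subUset LS RS /=; apply/subsetP => x xS.
rewrite inE; apply/negPn/negP; rewrite negb_or => /andP[xL xR].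
have xF : inr x |: F \in disjoint_join D S.
  by rewrite in_disjoint_join lpart_setU1r rpart_setU1r LD disjoint_sym disjointU1l
             xL disjoint_sym dis subUset sub1set xS RS.
by move: xR; rewrite inE -(Fmax _ xF (subsetU1 _ _)) setU11.
Qed.

Lemma pure_disjoint_join D S : D \subset powerset S -> pure (disjoint_join D S).
Proof.
by move=> DS F G /(card_facet_disjoint_join DS) -> /(card_facet_disjoint_join DS) ->.
Qed.

Lemma disjoint_join_no_vertex D S : simplicial_complex D ->
  (forall v, [set v] \notin D) -> disjoint_join D S = powerset (inr @: S).
Proof.
move=> [D0 Dc] novD.
have D_set0 A : (A \in D) = (A == set0).
  apply/idP/eqP => [AD|->//]; apply/setP => x; rewrite inE; apply/negP => xA.
  by move: (novD x); rewrite (Dc _ _ AD) // sub1set.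
apply/setP => F; rewrite powersetE in_disjoint_join D_set0.
apply/and3P/subsetP => [[/eqP L0 _ RS] [x|x] xF|FS].
- by move: (in_set0 x); rewrite -L0 inE xF.
- by apply/imsetP; exists x => //; apply: (subsetP RS); rewrite inE.
have L0 : lpart F = set0.
  by apply/setP => x; rewrite !inE; apply/negP => /FS /imsetP[].
split.
- by rewrite L0.
- by rewrite L0 -setI_eq0 set0I.
- by apply/subsetP => x; rewrite inE => /FS /imsetP[y yS [->]].
Qed.

Lemma vertex_decomposable_disjoint_join D S : simplicial_complex D ->
  D \subset powerset S -> vertex_decomposable (disjoint_join D S).
Proof.
have [n] := ubnP (#|D| + #|S|); elim: n D S => // n IH D S ltDS sD DS.
have [/existsP[v vD]|novD] := boolP [exists v, [set v] \in D]; last first.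
  rewrite disjoint_join_no_vertex //; first exact: vd_simplex.
  by move=> v; apply: contra novD => vD; apply/existsP; exists v.
have vS : v \in S by have := subsetP DS _ vD; rewrite powersetE sub1set.
have linkS : link D v \subset powerset (S :\ v).
  apply/subsetP => A; rewrite !inE => /and3P[AD vA _].
  by rewrite subsetD1 vA andbT -powersetE (subsetP DS).
have delS : del D v \subset powerset S := subset_trans (proper_sub (del_proper vD)) DS.
apply: (vd_step (v := inl v)); rewrite ?link_disjoint_join ?del_disjoint_join.
- exact: pure_disjoint_join.
- have -> : [set inl v] = inl v |: (set0 : {set T + T}) by rewrite setU0.
  rewrite in_disjoint_join lpart_setU1l rpart_setU1l.
  by rewrite /lpart /rpart !preimset0 setU0 vD -setI_eq0 setI0 sub0set eqxx.
- exact: pure_disjoint_join.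
- exact: pure_disjoint_join.
- apply: IH (link_simplicial sD vD) linkS.
  have := subset_leq_card (link_sub D v); have := cardsD1 v S; rewrite vS; lia.
- apply: IH (del_simplicial v sD) delS.
  have := proper_card (del_proper vD); lia.
Qed.

Lemma flag_disjoint_join D S : flag_complex D -> flag_complex (disjoint_join D S).
Proof.
move=> [[D0 Dc] Dflag]; split; first split.
- by rewrite in_disjoint_join /lpart /rpart !preimset0 D0 -setI_eq0 setI0 sub0set eqxx.
- move=> F G; rewrite !in_disjoint_join => /and3P[LG dis RS] FG.
  have LFG : lpart F \subset lpart G by apply: preimsetS.
  have RFG : rpart F \subset rpart G by apply: preimsetS.
  by rewrite (Dc _ _ LG LFG) (disjointWl LFG (disjointWr RFG dis)) (subset_trans RFG).
move=> F Fpairs; rewrite in_disjoint_join; apply/and3P; split.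
- apply: Dflag => x y; rewrite !inE => xF yF.
  have /disjoint_joinP[+ _ _] := Fpairs _ _ xF yF; congr (_ \in D).
  by apply/setP => z; rewrite !inE.
- rewrite -setI_eq0; apply/eqP/setP => x; rewrite !inE; apply/negP => /andP[lxF rxF].
  have /disjoint_joinP[_ + _] := Fpairs _ _ lxF rxF.
  by rewrite -setI_eq0; apply/negP/set0Pn; exists x; rewrite !inE !eqxx orbT.
apply/subsetP => x; rewrite inE => rxF.
have /disjoint_joinP[_ _ /subsetP] := Fpairs _ _ rxF rxF; apply.
by rewrite !inE eqxx.
Qed.

Definition set_of_parts (p : {set T} * {set T}) : {set T + T} :=
  [set x | match x with inl a => a \in p.1 | inr b => b \in p.2 end].

Lemma lpart_set_of_parts p : lpart (set_of_parts p) = p.1.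
Proof. by apply/setP => x; rewrite !inE. Qed.

Lemma rpart_set_of_parts p : rpart (set_of_parts p) = p.2.
Proof. by apply/setP => x; rewrite !inE. Qed.

Lemma set_of_parts_bij : bijective set_of_parts.
Proof.
exists (fun F => (lpart F, rpart F)).
  by case=> A B; rewrite lpart_set_of_parts rpart_set_of_parts.
by move=> F; apply/setP => [[x|x]]; rewrite !inE.
Qed.

(* A face [A ⊔ B] with [k] elements has [B] a [(k - |A|)]-subset of the complement of [A]. *)
Lemma fcount_disjoint_join D k :
  fcount (disjoint_join D setT) k = \sum_(A in D) (#|A| <= k) * 'C(#|T| - #|A|, k - #|A|).
Proof.
rewrite /fcount -sum1dep_card (reindex _ (onW_bij _ set_of_parts_bij)) /=.
under eq_bigl => p do rewrite in_disjoint_join card_lpart_rpart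
  lpart_set_of_parts rpart_set_of_parts subsetT andbT -andbA.
rewrite -(pair_big_dep (mem D) (fun A B => [disjoint A & B] && (#|A| + #|B| == k))
            (fun _ _ => 1)) /=.
apply: eq_bigr => A _; have [Ak|kA] := leqP #|A| k; last first.
  by rewrite mul0n big_pred0 // => B; apply/negP => /andP[_ /eqP]; lia.
rewrite mul1n sum1dep_card -[#|T|](cardsC A) addKn -cards_draws.
apply: eq_card => B; rewrite !inE disjoint_sym disjoints_subset.
by congr (_ && _); apply/eqP/eqP => [<-|->]; rewrite ?addKn ?subnKC.
Qed.

Lemma cdim_disjoint_join D : set0 \in D -> cdim (disjoint_join D setT) = #|T|.
Proof.
move=> D0; apply/anti_leq/andP; split.
  apply/bigmax_leqP => F /disjoint_joinP[_ dis _].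
  by rewrite card_lpart_rpart -cardsUI (disjoint_setI0 dis) cards0 addn0 max_card.
have coface : set_of_parts (set0, setT) \in disjoint_join D setT.
  by rewrite in_disjoint_join lpart_set_of_parts rpart_set_of_parts D0 subxx
             -setI_eq0 set0I eqxx.
apply: leq_trans (leq_bigmax_cond _ coface).
by rewrite card_lpart_rpart lpart_set_of_parts rpart_set_of_parts cards0 cardsT.
Qed.

End DisjointJoin.

Lemma mul_bin_nested m l k : k <= l -> l <= m ->
  'C(m - k, l - k) * 'C(m, k) = 'C(m, l) * 'C(l, k).
Proof.
move=> kl lm; have km := leq_trans kl lm.
have fact_mlk := bin_fact (leq_sub2r k lm).
rewrite (_ : m - k - (l - k) = m - l) in fact_mlk; last by lia.
apply/eqP; rewrite -(@eqn_pmul2r (k`! * ((l - k)`! * (m - l)`!))) ?muln_gt0 ?fact_gt0 //.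
apply/eqP; transitivity m`!.
  by rewrite -(bin_fact km) -fact_mlk; ring.
by rewrite -(bin_fact lm) -(bin_fact kl); ring.
Qed.

Local Open Scope ring_scope.

Lemma sum_alternating_bin l :
  \sum_(k < l.+1) (-1) ^+ (l - k) * ('C(l, k))%:Z = (l == 0)%N%:Z :> int.
Proof.
have := exprDn (-1 : int) 1 l; rewrite addNr expr0n natz => ->.
by apply: eq_bigr => i _; rewrite expr1n mulr1 -natz mulr_natr.
Qed.

(* The inversion behind [h]-vectors: the sum only involves [a <= i <= j], and after
   the reindexing [i = a + k] it is 'C(n - a, j - a) times an alternating binomial sum. *)
Lemma binomial_inversion (n a j : nat) : (a <= n)%N -> (j <= n)%N ->
  \sum_(i < j.+1) (-1) ^+ (j - i) * ('C(n - i, j - i) * ((a <= i) * 'C(n - a, i - a)))%N%:Z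
  = (a == j)%:Z :> int.
Proof.
move=> an jn; rewrite -(big_mkord xpredT
  (fun i => (-1) ^+ (j - i) * ('C(n - i, j - i) * ((a <= i) * 'C(n - a, i - a)))%N%:Z)).
have [ja|aj] := ltnP j a.
  rewrite big_nat_cond big1 ?gtn_eqF // => i /andP[/andP[_ ij] _].
  by rewrite leqNgt (leq_ltn_trans (ltnSE ij) ja) mul0n muln0 mulr0.
rewrite (@big_cat_nat _ _ _ a 0 j.+1 _ _ (leq0n a) (leqW aj)) /=.
rewrite big_nat_cond big1 ?add0r; last first.
  by move=> i /andP[/andP[_ ia] _]; rewrite leqNgt ia mul0n muln0 mulr0.
rewrite -{1}[a]add0n big_addn subSn // big_mkord.
transitivity (\sum_(k < (j - a).+1)
  ('C(n - a, j - a))%:Z * ((-1) ^+ (j - a - k) * ('C(j - a, k))%:Z)).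
  apply: eq_bigr => k _; have kja : (k <= j - a)%N := ltnSE (ltn_ord k).
  rewrite leq_addl addnK mul1n (addnC k a) !subnDA mul_bin_nested ?leq_sub2r //.
  by rewrite PoszM mulrCA.
rewrite -big_distrr /= sum_alternating_bin subn_eq0.
case: (eqVneq a j) => [<-|ne]; first by rewrite leqnn subnn bin0 mulr1.
by rewrite leqNgt ltn_neqAle ne aj mulr0.
Qed.

Lemma hentry_disjoint_join (T : finType) (D : {set {set T}}) j :
  set0 \in D -> (j <= #|T|)%N -> hentry (disjoint_join D setT) j = (fcount D j)%:Z.
Proof.
move=> D0 jn; rewrite /hentry cdim_disjoint_join //.
under eq_bigr => i _ do
  rewrite fcount_disjoint_join big_distrr (big_morph Posz PoszD (erefl 0%:Z)) big_distrr /=.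
rewrite exchange_big /=.
under eq_bigr => A _ do rewrite binomial_inversion ?max_card //.
rewrite /fcount -sum1dep_card (big_morph Posz PoszD (erefl 0%:Z)) big_mkcondr /=.
by apply: eq_bigr => A _; case: (#|A| == j)%N.
Qed.

Lemma strip_trailing_zeros_cat_nseq0 s k :
  strip_trailing_zeros (s ++ nseq k 0) = strip_trailing_zeros s.
Proof.
rewrite /strip_trailing_zeros foldr_cat; congr foldr.
by elim: k => //= k ->; rewrite eqxx.
Qed.

Lemma strip_trailing_zeros_rcons s (x : int) :
  x != 0 -> strip_trailing_zeros (rcons s x) = rcons s x.
Proof.
move=> x0; rewrite /strip_trailing_zeros -cats1 foldr_cat /= (negbTE x0).
by elim: s => //= y s ->; case: s.
Qed.

Section FaceCounts.
Variable T : finType.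
Implicit Types (D : {set {set T}}).

Lemma cdim_le_card D : (cdim D <= #|T|)%N.
Proof. by apply/bigmax_leqP => F _; apply: max_card. Qed.

Lemma fcount_gt_cdim D k : (cdim D < k)%N -> fcount D k = 0%N.
Proof.
move=> Dk; apply/eqP; rewrite cards_eq0; apply/eqP/setP => F; rewrite !inE.
apply/negbTE/andP => -[FD /eqP Fk].
by move: Dk; rewrite -Fk ltnNge (leq_bigmax_cond _ FD).
Qed.

Lemma fcount_cdim_gt0 D : set0 \in D -> (0 < fcount D (cdim D))%N.
Proof.
move=> D0; have D_gt0 : (0 < #|D|)%N by apply/card_gt0P; exists set0.
have [F FD eF] := @eq_bigmax_cond _ (mem D) (fun F => #|F|) D_gt0.
by rewrite card_gt0; apply/set0Pn; exists F; rewrite !inE FD -eF eqxx.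
Qed.

Lemma hvector_disjoint_join D : set0 \in D ->
  hvector (disjoint_join D setT) = map Posz (fvector D) ++ nseq (#|T| - cdim D) 0.
Proof.
move=> D0; rewrite /hvector /fvector /mkseq cdim_disjoint_join //.
rewrite -{1}(subnKC (cdim_le_card D)) -addSn iotaD map_cat add0n -map_comp.
congr (_ ++ _); last first.
  set s := map _ _; have -> : (#|T| - cdim D)%N = size s by rewrite size_map size_iota.
  apply/all_pred1P/allP => _ /mapP[j + ->]; rewrite mem_iota => /andP[Dj jT].
  rewrite inE hentry_disjoint_join ?fcount_gt_cdim //; have := cdim_le_card D; lia.
apply/eq_in_map => j; rewrite mem_iota /= => jD.
by rewrite hentry_disjoint_join // (leq_trans (ltnSE jD)) ?cdim_le_card.
Qed.

End FaceCounts.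

Theorem corollary3p7 (T : finType) (D : {set {set T}}) :
  flag_complex D ->
  exists (U : finType) (G : {set {set U}}),
    [/\ flag_complex G, vertex_decomposable G &
        strip_trailing_zeros (hvector G) = map Posz (fvector D)].
Proof.
move=> flagD; have [[D0 _] _] := flagD.
exists (T + T)%type, (disjoint_join D setT); split.
- exact: flag_disjoint_join.
- by apply: vertex_decomposable_disjoint_join flagD.1 _; rewrite powersetT subsetT.
rewrite hvector_disjoint_join // strip_trailing_zeros_cat_nseq0 /fvector mkseqS map_rcons.
by rewrite strip_trailing_zeros_rcons // eqz_nat -lt0n fcount_cdim_gt0.
Qed.
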